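(* Let $A\in\mathbb Z^{d\times n}$ with $\ker(A)\cap\mathbb N^n=\{0\}$. Let $\mathcal B$ be the set of minimal distance reducing Markov bases of $A$ and $\mathcal B^s$ the set of minimal strongly distance reducing Markov bases. Then, with elements of $\ker(A)$ identified with their negatives, $D(A)=\bigcap_{B\in\mathcal B}B$ and $D^w(A)=\bigcap_{B\in\mathcal B^s}B$; i.e., a nonzero $z\in\ker(A)$ lies in $D(A)$ if and only if $z\in B$ or $-z\in B$ for every $B\in\mathcal B$, and lies in $D^w(A)$ if and only if $z\in B$ or $-z\in B$ for every $B\in\mathcal B^s$.
   Context: For $z\in\mathbb Z^n$, $z^\pm\in\mathbb N^n$ are the unique vectors with disjoint supports and $z=z^+-z^-$; $\|\cdot\|$ is the $1$-norm; $\le$ is coordinatewise. A positive (resp. negative) distance decomposition of $z\in\ker(A)$ is $z=u+v$ with $u,v\in\ker(A)\setminus\{0\}$, $u^+\le z^+$ (resp. $u^-\le z^-$) and $\|v\|<\|z\|$. $D^+(A)$ (resp. $D^-(A)$) is the set of nonzero $z\in\ker(A)$ with no positive (resp. negative) distance decomposition; $D(A)=D^+(A)\cap D^-(A)$, $D^w(A)=D^+(A)\cup D^-(A)$. For nonzero $z\in\ker(A)$: $u$ reduces $z$ from $z^+$ if some $\varepsilon\in\{\pm1\}$ has $z^++\varepsilon u\in\mathbb N^n$ and $\|z^++\varepsilon u-z^-\|<\|z\|$; from $z^-$ if some $\varepsilon$ has $z^-+\varepsilon u\in\mathbb N^n$ and $\|z^+-(z^-+\varepsilon u)\|<\|z\|$.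 $B\subseteq\ker(A)$ is distance reducing if each nonzero $z$ is reduced from $z^+$ or $z^-$ by some element of $B$; strongly distance reducing if each nonzero $z$ is reduced from $z^+$ by some element of $B$ and from $z^-$ by some element of $B$. A minimal (strongly) distance reducing Markov basis is a (strongly) distance reducing set no proper subset of which is (strongly) distance reducing. *)

From HB Require Import structures.
From mathcomp Require Import all_boot all_order all_algebra.
Set Implicit Arguments. Unset Strict Implicit. Unset Printing Implicit Defensive.
Import Order.TTheory GRing.Theory Num.Theory.
Local Open Scope ring_scope.

Section Defs.
Variables (d n : nat) (A : 'M[int]_(d, n)).

Definition inker (z : 'cV[int]_n) : Prop := A *m z = 0.

Definition posp (z : 'cV[int]_n) : 'cV[int]_n := \col_i Num.max (z i 0) 0.
Definition negp (z : 'cV[int]_n) : 'cV[int]_n := \col_i Num.max (- z i 0) 0.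

Definition norm1 (z : 'cV[int]_n) : int := \sum_i `|z i 0|.

Definition nonneg (z : 'cV[int]_n) : Prop := forall i, 0 <= z i 0.

Definition lev (u v : 'cV[int]_n) : Prop := forall i, u i 0 <= v i 0.

Definition pos_dist_decomp (z : 'cV[int]_n) : Prop :=
  exists u v : 'cV[int]_n, [/\ inker u, inker v, u <> 0, v <> 0 &
    [/\ z = u + v, lev (posp u) (posp z) & norm1 v < norm1 z]].

Definition neg_dist_decomp (z : 'cV[int]_n) : Prop :=
  exists u v : 'cV[int]_n, [/\ inker u, inker v, u <> 0, v <> 0 &
    [/\ z = u + v, lev (negp u) (negp z) & norm1 v < norm1 z]].

Definition Dplus (z : 'cV[int]_n) : Prop :=
  [/\ inker z, z <> 0 & ~ pos_dist_decomp z].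
Definition Dminus (z : 'cV[int]_n) : Prop :=
  [/\ inker z, z <> 0 & ~ neg_dist_decomp z].
Definition Dset (z : 'cV[int]_n) : Prop := Dplus z /\ Dminus z.
Definition Dweak (z : 'cV[int]_n) : Prop := Dplus z \/ Dminus z.

Definition reduces_pos (u z : 'cV[int]_n) : Prop :=
  exists eps : int, (eps = 1 \/ eps = -1) /\
    nonneg (posp z + eps *: u) /\ norm1 (posp z + eps *: u - negp z) < norm1 z.

Definition reduces_neg (u z : 'cV[int]_n) : Prop :=
  exists eps : int, (eps = 1 \/ eps = -1) /\
    nonneg (negp z + eps *: u) /\ norm1 (posp z - (negp z + eps *: u)) < norm1 z.

Definition distance_reducing (B : 'cV[int]_n -> Prop) : Prop :=
  (forall b, B b -> inker b) /\
  forall z, inker z -> z <> 0 ->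
    exists u, B u /\ (reduces_pos u z \/ reduces_neg u z).

Definition strongly_distance_reducing (B : 'cV[int]_n -> Prop) : Prop :=
  (forall b, B b -> inker b) /\
  forall z, inker z -> z <> 0 ->
    (exists u, B u /\ reduces_pos u z) /\ (exists u, B u /\ reduces_neg u z).

Definition proper_subset (B' B : 'cV[int]_n -> Prop) : Prop :=
  (forall x, B' x -> B x) /\ exists x, B x /\ ~ B' x.

Definition minimal_DR_basis (B : 'cV[int]_n -> Prop) : Prop :=
  distance_reducing B /\ forall B', proper_subset B' B -> ~ distance_reducing B'.

Definition minimal_SDR_basis (B : 'cV[int]_n -> Prop) : Prop :=
  strongly_distance_reducing B /\
  forall B', proper_subset B' B -> ~ strongly_distance_reducing B'.

End Defs.

(** If z is in D^+(A) and a kernel element u reduces z from z^+, then z = (-eu) + (z + eu)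
    is a positive distance decomposition unless u = z or u = -z; so every distance reducing
    set meets {z, -z} when z is in D(A), and every strongly distance reducing set does when z
    is in D^w(A).  Reducing z from z^- is the same as reducing -z from (-z)^+, which transfers
    everything to the negative side.  Conversely, a distance decomposition of z yields a
    reducer of z other than z and -z, so ker(A) minus {z, -z} stays (strongly) distance
    reducing when z is not in D(A) (resp. D^w(A)), and a minimal subset of it misses z and -z.
    Minimal subsets exist because each z has finitely many reducers (their 1-norm is at most
    twice that of z): walk through an enumeration of Z^n, discarding an element whenever the others
    still reduce every z; each z is settled after finitely many steps. *)

From mathcomp Require Import all_boot all_order all_algebra zify.
From Stdlib Require Import Classical.
Import Order.TTheory GRing.Theory Num.Theory.
Local Open Scope ring_scope.

Set Implicit Arguments.
Unset Strict Implicit.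
Unset Printing Implicit Defensive.

Section MinimalHittingSet.
Variables (T : countType) (I : Type) (P : I -> Prop) (R : I -> T -> Prop).
Hypothesis R_finite : forall i, P i -> exists s : seq T, forall u, R i u -> u \in s.

Definition hitting (S : T -> Prop) := forall i, P i -> exists u, S u /\ R i u.

Fixpoint prune (S : T -> Prop) (k : nat) : T -> Prop :=
  if k is k'.+1 then fun x =>
    prune S k' x /\ ~ (pickle x = k' /\ hitting (fun y => prune S k' y /\ y <> x))
  else S.

Definition pruned (S : T -> Prop) x := forall k, prune S k x.

Lemma prune_sub S m k x : (m <= k)%N -> prune S k x -> prune S m x.
Proof.
elim: k => [|k IH]; first by rewrite leqn0 => /eqP ->.
by rewrite leq_eqVlt => /orP[/eqP -> //|]; rewrite ltnS => mk [/(IH mk)].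
Qed.

Lemma prune_hitting S k : hitting S -> hitting (prune S k).
Proof.
move=> hS; elim: k => [//|k IH] i Pi /=.
case: (classic (exists x, pickle x = k /\ hitting (fun y => prune S k y /\ y <> x))).
- case=> x [px hx]; have [u [[Su ux] Riu]] := hx i Pi.
  exists u; split=> //; split=> // -[pu _]; apply: ux.
  by apply: (pcan_inj (@pickleK T)); rewrite pu px.
- move=> nx; have [u [Su Riu]] := IH i Pi.
  by exists u; split=> //; split=> // hu; apply: nx; exists u.
Qed.

Lemma pruned_hitting S : hitting S -> hitting (pruned S).
Proof.
move=> hS i Pi; have [s Rs] := R_finite Pi.
pose N := (\max_(x <- s) pickle x).+1.
have [u [Su Riu]] := prune_hitting N hS Pi; exists u; split=> //.
have ltuN : (pickle u < N)%N by rewrite ltnS; exact: leq_bigmax_seq (Rs u Riu) _.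
(* Stage [k.+1] can only remove the element of code [k], and [u] has code [< N]. *)
elim=> [|k IH]; first exact: prune_sub (leq0n N) Su.
case: (pickle u =P k) => [<-|neq]; first exact: prune_sub ltuN Su.
by split=> // -[/neq].
Qed.

Lemma pruned_minimal S B x :
  (forall y, B y -> pruned S y) -> pruned S x -> ~ B x -> ~ hitting B.
Proof.
move=> sub Sx nBx hB; have [_ []] := Sx (pickle x).+1; split=> // i Pi.
have [u [Bu Riu]] := hB i Pi; exists u; split=> //; split; first exact: sub.
by move=> ux; apply: nBx; rewrite -ux.
Qed.

Lemma minimal_hitting_subset S : hitting S -> exists B,
  [/\ forall x, B x -> S x, hitting B &
      forall B', (forall x, B' x -> B x) -> forall x, B x -> ~ B' x -> ~ hitting B'].
Proof.
move=> hS; exists (pruned S); split; first by move=> x /(_ 0%N).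
  exact: pruned_hitting.
by move=> B' sub x Sx nB'x; apply: pruned_minimal Sx nB'x.
Qed.

End MinimalHittingSet.

Section DistanceReduction.
Variables (d n : nat) (A : 'M[int]_(d, n)).
Implicit Types (u v w y z : 'cV[int]_n).

Lemma inkerB u v : inker A u -> inker A v -> inker A (u - v).
Proof. by rewrite /inker mulmxBr => -> ->; rewrite subr0. Qed.

Lemma inkerN u : inker A u -> inker A (- u).
Proof. by rewrite -sub0r; apply: inkerB; rewrite /inker mulmx0. Qed.

Lemma oppr_neq0 u : u <> 0 -> - u <> 0.
Proof. by move=> nu /eqP; rewrite oppr_eq0 => /eqP. Qed.

Lemma pospN z : posp (- z) = negp z.
Proof. by apply/matrixP => i j; rewrite !mxE. Qed.

Lemma negpN z : negp (- z) = posp z.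
Proof. by apply/matrixP => i j; rewrite !mxE opprK. Qed.

Lemma posp_sub_negp z : posp z - negp z = z.
Proof. by apply/matrixP => i j; rewrite ord1 !mxE; move: (z i 0) => a; lia. Qed.

Lemma nonneg_posp_subP z w : nonneg (posp z - w) <-> lev (posp w) (posp z).
Proof. by split=> h i; have := h i; rewrite !mxE; move: (z i 0) (w i 0) => a b; lia. Qed.

Lemma norm1_ge0 z : 0 <= norm1 z.
Proof. exact: sumr_ge0. Qed.

Lemma norm1N z : norm1 (- z) = norm1 z.
Proof. by apply: eq_bigr => i _; rewrite mxE normrN. Qed.

Lemma norm1Mn z k : norm1 (z *+ k) = norm1 z *+ k.
Proof. by rewrite /norm1 -sumrMnl; apply: eq_bigr => i _; rewrite mulmxnE normrMn. Qed.

Lemma norm1_sub_le z w : norm1 (z - w) <= norm1 z + norm1 w.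
Proof.
by rewrite /norm1 -big_split ler_sum // => i _; rewrite !mxE ler_normB.
Qed.

Lemma norm1_entry z i : `|z i 0| <= norm1 z.
Proof. by rewrite /norm1 (bigD1 i) //= lerDl sumr_ge0. Qed.

Lemma norm1_gt0 z : z <> 0 -> 0 < norm1 z.
Proof.
move=> nz; rewrite lt_def norm1_ge0 andbT; apply/eqP => /psumr_eq0P z0.
by apply: nz; apply/matrixP => i j; rewrite ord1 mxE; apply/eqP/normr0P/z0.
Qed.

Lemma norm1_ball_finite (r : int) :
  exists s : seq 'cV[int]_n, forall u, norm1 u <= r -> u \in s.
Proof.
pose K := `|r|%N; pose shift (k : 'I_(K + K).+1) := k%:Z - K%:Z.
exists (codom (map_mx shift)) => u ur.
have -> : u = map_mx shift (map_mx (fun a : int => inord (absz (a + K%:Z))) u).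
  apply/matrixP => i j; rewrite ord1 !mxE /shift inordK;
    have := norm1_entry u i; move: ur; rewrite /K; move: (u i 0) (norm1 u) => a N; lia.
exact: codom_f.
Qed.

Definition pos_step w z := lev (posp w) (posp z) /\ norm1 (z - w) < norm1 z.

Lemma pos_step_neq w z : pos_step w z -> w <> 0 /\ w <> - z.
Proof.
case=> _ hlt; split=> [w0|wNz]; first by rewrite w0 subr0 ltxx in hlt.
by move: hlt; rewrite wNz opprK -mulr2n norm1Mn mulr2n ltNge lerDl norm1_ge0.
Qed.

Lemma pos_step_self y : y <> 0 -> pos_step y y.
Proof.
move=> ny; split=> [i //|]; rewrite subrr (_ : norm1 0 = 0) ?norm1_gt0 //.
by rewrite /norm1 big1 // => i _; rewrite mxE.
Qed.

Lemma pos_step_norm1 w z : pos_step w z -> norm1 w <= norm1 z *+ 2.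
Proof.
case=> _ /ltW hlt; rewrite -{1}(subKr z w) mulr2n.
exact: le_trans (norm1_sub_le _ _) (lerD (lexx _) hlt).
Qed.

Lemma reduces_pos_step e u z :
  nonneg (posp z + e *: u) /\ norm1 (posp z + e *: u - negp z) < norm1 z <->
  pos_step (- (e *: u)) z.
Proof.
rewrite addrAC posp_sub_negp; set w := - (e *: u); rewrite -[e *: u]opprK -/w.
by split=> -[nn hlt]; split=> //; apply/nonneg_posp_subP.
Qed.

Lemma reduces_posP u z : reduces_pos u z <-> pos_step u z \/ pos_step (- u) z.
Proof.
split.
- case=> e [[->|->] /reduces_pos_step]; rewrite ?scale1r ?scaleN1r ?opprK; by [right|left].
- case=> st; [exists (-1) | exists 1]; (split; [by [right|left] | apply/reduces_pos_step]);
    by rewrite ?scale1r ?scaleN1r ?opprK.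
Qed.

Lemma reduces_negN u z : reduces_neg u z <-> reduces_pos u (- z).
Proof.
rewrite /reduces_pos pospN negpN norm1N.
have flip e : posp z - (negp z + e *: u) = - (negp z + e *: u - posp z) by rewrite opprB.
by split=> -[e [he [nn hlt]]]; exists e; move: hlt; rewrite flip norm1N.
Qed.

Lemma pos_dist_decompP z : inker A z ->
  pos_dist_decomp A z <-> exists w, [/\ inker A w, w <> 0, w <> z & pos_step w z].
Proof.
move=> kz; split.
- case=> u [v [ku kv nu nv [-> hle hlt]]]; exists u; split=> //.
    by move=> uv; apply: nv; apply: (@addrI _ u); rewrite addr0 -uv.
  by split; last rewrite addrAC subrr add0r.
- case=> w [kw nw wz [hle hlt]]; exists w, (z - w); split=> //.
  + exact: inkerB.
  + by move=> /eqP; rewrite subr_eq0 => /eqP/esym.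
  + by rewrite addrC subrK.
Qed.

Lemma neg_dist_decompN z : neg_dist_decomp A z <-> pos_dist_decomp A (- z).
Proof.
split=> -[u [v [ku kv nu nv [ez hle hlt]]]]; exists (- u), (- v);
  (split; [exact: inkerN | exact: inkerN | exact: oppr_neq0 | exact: oppr_neq0 | split]).
- by rewrite ez opprD.
- by rewrite !pospN.
- by rewrite !norm1N.
- by rewrite -opprD -ez opprK.
- by rewrite negpN -pospN.
- by rewrite norm1N -(norm1N z).
Qed.

Lemma DminusN z : Dminus A z <-> Dplus A (- z).
Proof.
split=> -[kz nz nd]; split.
- exact: inkerN.
- exact: oppr_neq0.
- by move/neg_dist_decompN.
- by rewrite -[z]opprK; exact: inkerN.
- by rewrite -[z]opprK; exact: oppr_neq0.
- by move/neg_dist_decompN.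
Qed.

Lemma Dplus_step z w : Dplus A z -> inker A w -> pos_step w z -> w = z.
Proof.
case=> kz _ nodec kw st; case: (eqVneq w z) => [//|/eqP wz]; case: nodec.
by apply/pos_dist_decompP => //; exists w; split=> //; exact: (pos_step_neq st).1.
Qed.

Lemma Dplus_reduces z u : Dplus A z -> inker A u -> reduces_pos u z -> u = z \/ u = - z.
Proof.
move=> Dz ku /reduces_posP[st|st]; first by left; exact: Dplus_step st.
by right; rewrite -(Dplus_step Dz (inkerN ku) st) opprK.
Qed.

Lemma Dminus_reduces z u : Dminus A z -> inker A u -> reduces_neg u z -> u = z \/ u = - z.
Proof.
move=> /DminusN Dz ku /reduces_negN /(Dplus_reduces Dz ku).
by rewrite opprK => -[]; [right|left].
Qed.

Definition ker_avoiding z y := [/\ inker A y, y <> z & y <> - z].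

Lemma pos_decomp_reducer z : inker A z -> pos_dist_decomp A z ->
  exists u, ker_avoiding z u /\ reduces_pos u z.
Proof.
move=> kz /(pos_dist_decompP kz) [w [kw _ wz st]]; exists w; split.
  by split=> //; exact: (pos_step_neq st).2.
by apply/reduces_posP; left.
Qed.

Lemma neg_decomp_reducer z : inker A z -> neg_dist_decomp A z ->
  exists u, ker_avoiding z u /\ reduces_neg u z.
Proof.
move=> kz /neg_dist_decompN /(pos_decomp_reducer (inkerN kz)) [u [[ku uNz uz] r]].
by exists u; split; [split=> //; rewrite opprK in uz | exact/reduces_negN].
Qed.

Lemma reduces_self y : y <> 0 -> reduces_pos y y /\ reduces_neg y y.
Proof.
move=> ny; split; first by apply/reduces_posP; left; exact: pos_step_self.
by apply/reduces_negN/reduces_posP; right; exact/pos_step_self/oppr_neq0.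
Qed.

Lemma reduces_norm1 u z : reduces_pos u z \/ reduces_neg u z -> norm1 u <= norm1 z *+ 2.
Proof.
have pos_case z' : reduces_pos u z' -> norm1 u <= norm1 z' *+ 2.
  by case/reduces_posP=> /pos_step_norm1; rewrite ?norm1N.
by case=> [|/reduces_negN] /pos_case; rewrite ?norm1N.
Qed.

Lemma reducers_finite z :
  exists s : seq 'cV[int]_n, forall u, reduces_pos u z \/ reduces_neg u z -> u \in s.
Proof.
have [s hs] := norm1_ball_finite (norm1 z *+ 2).
by exists s => u /reduces_norm1 /hs.
Qed.

Lemma Dset_mem_DR z B : Dset A z -> distance_reducing A B -> B z \/ B (- z).
Proof.
move=> [Dp Dm] [kB redB]; have [kz nz _] := Dp.
have [u [Bu [r|r]]] := redB z kz nz.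
- by case: (Dplus_reduces Dp (kB u Bu) r) => <-; [left|right].
- by case: (Dminus_reduces Dm (kB u Bu) r) => <-; [left|right].
Qed.

Lemma Dweak_mem_SDR z B : Dweak A z -> strongly_distance_reducing A B -> B z \/ B (- z).
Proof.
move=> Dz [kB redB]; have [kz nz] : inker A z /\ z <> 0 by case: Dz => -[].
have [[u [Bu ru]] [v [Bv rv]]] := redB z kz nz.
case: Dz => [Dp|Dm].
- by case: (Dplus_reduces Dp (kB u Bu) ru) => <-; [left|right].
- by case: (Dminus_reduces Dm (kB v Bv) rv) => <-; [left|right].
Qed.

Lemma ker_avoiding_DR z : inker A z -> z <> 0 -> ~ Dset A z ->
  distance_reducing A (ker_avoiding z).
Proof.
move=> kz nz nD.
have [x [avx rx]] : exists x, ker_avoiding z x /\ (reduces_pos x z \/ reduces_neg x z).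
  have [/(pos_decomp_reducer kz) [x [avx rx]]|nP] := classic (pos_dist_decomp A z).
    by exists x; split=> //; left.
  have [/(neg_decomp_reducer kz) [x [avx rx]]|nN] := classic (neg_dist_decomp A z).
    by exists x; split=> //; right.
  by case: nD; split; split.
split=> [y [] //|y ky ny].
have [->|/eqP yz] := eqVneq y z; first by exists x.
have [->|/eqP yNz] := eqVneq y (- z).
  exists x; split=> //.
  by case: rx => r; [right; apply/reduces_negN; rewrite opprK | left; apply/reduces_negN].
by exists y; split; [split | left; exact: (reduces_self ny).1].
Qed.

Lemma ker_avoiding_SDR z : inker A z -> z <> 0 -> ~ Dweak A z ->
  strongly_distance_reducing A (ker_avoiding z).
Proof.
move=> kz nz nD.
have /(pos_decomp_reducer kz) [xp [avp rp]] : pos_dist_decomp A z.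
  by apply: NNPP => nP; apply: nD; left; split.
have /(neg_decomp_reducer kz) [xn [avn rn]] : neg_dist_decomp A z.
  by apply: NNPP => nN; apply: nD; right; split.
split=> [y [] //|y ky ny].
have [->|/eqP yz] := eqVneq y z; first by split; [exists xp | exists xn].
have [->|/eqP yNz] := eqVneq y (- z).
  split; [exists xn | exists xp]; split=> //.
    exact/reduces_negN.
  by apply/reduces_negN; rewrite opprK.
by have [rp' rn'] := reduces_self ny; split; exists y.
Qed.

Lemma minimal_DR_basis_sub B0 : distance_reducing A B0 ->
  exists B, minimal_DR_basis A B /\ (forall x, B x -> B0 x).
Proof.
pose P z := inker A z /\ z <> 0.
pose R z u := reduces_pos u z \/ reduces_neg u z.
have Rfin z : P z -> exists s : seq _, forall u, R z u -> u \in s.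
  by move=> _; exact: reducers_finite.
case=> kB0 hB0; have [|B [sub hB minB]] := minimal_hitting_subset Rfin (S := B0).
  by move=> z [kz nz]; exact: hB0.
exists B; split=> //; split.
  by split=> [b /sub /kB0 //|z kz nz]; apply: hB; split.
move=> B' [sub' [x [Bx nB'x]]] [_ hB']; apply: minB sub' x Bx nB'x _.
by move=> z [kz nz]; exact: hB'.
Qed.

Lemma minimal_SDR_basis_sub B0 : strongly_distance_reducing A B0 ->
  exists B, minimal_SDR_basis A B /\ (forall x, B x -> B0 x).
Proof.
pose P (zb : 'cV[int]_n * bool) := inker A zb.1 /\ zb.1 <> 0.
pose R (zb : 'cV[int]_n * bool) u := if zb.2 then reduces_pos u zb.1 else reduces_neg u zb.1.
have Rfin zb : P zb -> exists s : seq _, forall u, R zb u -> u \in s.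
  move=> _; have [s hs] := reducers_finite zb.1; exists s => u.
  by rewrite /R; case: zb.2 => r; apply: hs; [left|right].
case=> kB0 hB0; have [|B [sub hB minB]] := minimal_hitting_subset Rfin (S := B0).
  by case=> z [] [kz nz]; have [] := hB0 z kz nz.
exists B; split=> //; split.
  split=> [b /sub /kB0 //|z kz nz].
  by split; [exact: (hB (z, true)) | exact: (hB (z, false))]; split.
move=> B' [sub' [x [Bx nB'x]]] [_ hB']; apply: minB sub' x Bx nB'x _.
by case=> z [] [kz nz]; have [] := hB' z kz nz.
Qed.

End DistanceReduction.

Theorem proposition8p5 (d n : nat) (A : 'M[int]_(d, n)) :
  (forall z : 'cV[int]_n, inker A z -> nonneg z -> z = 0) ->
  forall z : 'cV[int]_n, inker A z -> z <> 0 ->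
    (Dset A z <-> (forall B, minimal_DR_basis A B -> B z \/ B (- z))) /\
    (Dweak A z <-> (forall B, minimal_SDR_basis A B -> B z \/ B (- z))).
Proof.
move=> _ z kz nz; split; split.
- by move=> Dz B [DR_B _]; exact: Dset_mem_DR DR_B.
- move=> memB; apply: NNPP => nD.
  have [B [minB sub]] := minimal_DR_basis_sub (ker_avoiding_DR kz nz nD).
  by case: (memB B minB) => /sub [_ zz zNz]; [apply: zz | apply: zNz].
- by move=> Dz B [SDR_B _]; exact: Dweak_mem_SDR SDR_B.
- move=> memB; apply: NNPP => nD.
  have [B [minB sub]] := minimal_SDR_basis_sub (ker_avoiding_SDR kz nz nD).
  by case: (memB B minB) => /sub [_ zz zNz]; [apply: zz | apply: zNz].
Qed.
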